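(* Let $(S,\mathfrak{n})$ be a Noetherian local ring, $x_1,\dots,x_r\in S$, and $\Gamma$ a set of monomials in $P=k[T_1,\dots,T_r]$. Let $i_1<i_2$ be positive integers and let $i_3$ be either an integer with $i_3>i_2$ or $i_3=\infty$ (in which case $S$ is assumed complete). Consider: (1) $x_1,\dots,x_r$ is $\Gamma$-expandable from degree $i_1$ to $i_2$; (2) $x_1,\dots,x_r$ is $\Gamma$-expandable from degree $i_1$ to $i_3$; (3) $x_1,\dots,x_r$ is $\Gamma$-expandable from degree $i_2$ to $i_3$. Then any two of (1), (2), (3) imply the third.
   Context: Let $I=(x_1,\dots,x_r)$ and set $I^\infty=0$. For $u=T_1^{a_1}\cdots T_r^{a_r}$ let $u(x)=x_1^{a_1}\cdots x_r^{a_r}$; $\Gamma_k$ is the set of monomials of degree $k$ in $\Gamma$. A lifting is a map $\sigma:S/I\to S$ with $\sigma(0)=0$ and $\pi\circ\sigma=\mathrm{id}_{S/I}$, $\pi:S\to S/I$ the projection. For $0\le i<j<\infty$, $x_1,\dots,x_r$ is $\Gamma$-expandable from degree $i$ to $j$ if for every lifting $\sigma$, every $f\in I^i$ has a unique representation $f\equiv\sum_{u\in\Gamma_k,\,i\le k\le j-1}f_uu(x)\pmod{I^j}$ with all $f_u\in\sigma(S/I)$ (uniqueness of the family $(f_u)$). If $S$ is complete, $x_1,\dots,x_r$ is $\Gamma$-expandable from degree $i$ to $\infty$ if for every lifting $\sigma$ every $f\in I^i$ has a unique representation $f=\sum_{u\in\Gamma_k,\,k\ge i}f_uu(x)$ (convergent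 sum) with all $f_u\in\sigma(S/I)$. *)

From HB Require Import structures.
From mathcomp Require Import all_boot all_order all_algebra.
From mathcomp Require Import mpoly.
Set Implicit Arguments. Unset Strict Implicit. Unset Printing Implicit Defensive.
Import GRing.Theory.
Local Open Scope ring_scope.

Section Defs.
Variable S : comUnitRingType.

Definition is_ideal (J : S -> Prop) : Prop :=
  [/\ J 0, (forall a b, J a -> J b -> J (a + b)) & (forall c a, J a -> J (c * a))].

Definition ideal_gen (g : seq S) (f : S) : Prop :=
  exists c : seq S, size c = size g /\ f = \sum_(k < size g) c`_k * g`_k.

Definition ideal_pow (J : S -> Prop) (k : nat) (f : S) : Prop :=
  exists (c : seq S) (p : seq (seq S)),
    size c = size p /\
    (forall l, (l < size p)%N -> size (nth [::] p l) = k /\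
                forall a, a \in nth [::] p l -> J a) /\
    f = \sum_(l < size p) c`_l * \prod_(a <- nth [::] p l) a.

Definition noetherian : Prop :=
  forall J : S -> Prop, is_ideal J ->
    exists g : seq S, forall a, J a <-> ideal_gen g a.

(* Local: the non-units form an ideal (equivalently, there is a unique maximal
   ideal, namely the set of non-units). *)
Definition local_ring : Prop :=
  forall a b : S, a \isn't a GRing.unit -> b \isn't a GRing.unit ->
    (a + b) \isn't a GRing.unit.

Definition maxideal (a : S) : Prop := a \isn't a GRing.unit.

Definition nadic_lim (s : nat -> S) (l : S) : Prop :=
  forall k, exists N, forall m, (N <= m)%N -> ideal_pow maxideal k (s m - l).

Definition nadic_cauchy (s : nat -> S) : Prop :=
  forall k, exists N, forall m, (N <= m)%N -> ideal_pow maxideal k (s m - s N).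

Definition complete : Prop :=
  (forall a, (forall k, ideal_pow maxideal k a) -> a = 0) /\
  (forall s, nadic_cauchy s -> exists l, nadic_lim s l).

Variable r : nat.
Variable x : 'I_r -> S.

Definition Ix : S -> Prop := ideal_gen [seq x i | i <- enum 'I_r].

Definition mono_eval (u : 'X_{1..r}) : S := \prod_(i < r) x i ^+ u i.

(* A lifting sigma : S/I -> S is encoded by its composite with the projection,
   sigma o pi : S -> S, i.e. a map constant on cosets of I, with
   pi (sigma a) = pi a and sigma 0 = 0.  Its image is sigma(S/I). *)
Definition lifting (sigma : S -> S) : Prop :=
  [/\ sigma 0 = 0,
      (forall a, Ix (sigma a - a)) &
      (forall a b, Ix (a - b) -> sigma a = sigma b)].

Definition in_image (sigma : S -> S) (a : S) : Prop := exists b, a = sigma b.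

Variable Gamma : 'X_{1..r} -> bool.

Definition trunc_sum (c : 'X_{1..r} -> S) (i j : nat) : S :=
  \sum_(u : 'X_{1..r < j} | Gamma u && (i <= mdeg u)%N) c u * mono_eval u.

Definition expandable_fin (i j : nat) : Prop :=
  forall sigma, lifting sigma ->
  forall f, ideal_pow Ix i f ->
    (exists c : 'X_{1..r} -> S,
       (forall u : 'X_{1..r}, Gamma u -> (i <= mdeg u < j)%N -> in_image sigma (c u)) /\
       ideal_pow Ix j (f - trunc_sum c i j)) /\
    (forall c c' : 'X_{1..r} -> S,
       (forall u : 'X_{1..r}, Gamma u -> (i <= mdeg u < j)%N -> in_image sigma (c u)) ->
       ideal_pow Ix j (f - trunc_sum c i j) ->
       (forall u : 'X_{1..r}, Gamma u -> (i <= mdeg u < j)%N -> in_image sigma (c' u)) ->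
       ideal_pow Ix j (f - trunc_sum c' i j) ->
       forall u : 'X_{1..r}, Gamma u -> (i <= mdeg u < j)%N -> c u = c' u).

(* Gamma-expandable from degree i to infinity (S complete): the convergent sum
   sum_{u in Gamma, deg u >= i} c_u u(x) is the n-adic limit of its partial sums
   over degrees i <= deg u < N. *)
Definition expandable_inf (i : nat) : Prop :=
  forall sigma, lifting sigma ->
  forall f, ideal_pow Ix i f ->
    (exists c : 'X_{1..r} -> S,
       (forall u : 'X_{1..r}, Gamma u -> (i <= mdeg u)%N -> in_image sigma (c u)) /\
       nadic_lim (fun N => trunc_sum c i N) f) /\
    (forall c c' : 'X_{1..r} -> S,
       (forall u : 'X_{1..r}, Gamma u -> (i <= mdeg u)%N -> in_image sigma (c u)) ->
       nadic_lim (fun N => trunc_sum c i N) f ->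
       (forall u : 'X_{1..r}, Gamma u -> (i <= mdeg u)%N -> in_image sigma (c' u)) ->
       nadic_lim (fun N => trunc_sum c' i N) f ->
       forall u : 'X_{1..r}, Gamma u -> (i <= mdeg u)%N -> c u = c' u).

(* Target degree j : option nat, with None standing for infinity. *)
Definition expandable (i : nat) (j : option nat) : Prop :=
  match j with Some j' => expandable_fin i j' | None => expandable_inf i end.

End Defs.

From mathcomp Require Import all_boot all_order all_algebra.
From mathcomp Require Import mpoly.
From mathcomp Require Import zify ring.
From Stdlib Require Import Classical.
Set Implicit Arguments. Unset Strict Implicit. Unset Printing Implicit Defensive.
Local Open Scope ring_scope.
Import GRing.Theory.

(* Split a coefficient family at degree i2.  Its part in degrees [i1, i2)
   expands f modulo I^i2; the remainder f - (that part) lies in I^i2 and is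
   expanded by the part in degrees >= i2.  Conversely two such families glue
   to an expansion of f from degree i1.  Splitting and gluing transfer
   existence and uniqueness between the three degree ranges.

   For i3 = infinity the one non-formal point is that the sum g of a convergent
   series  sum_{deg u >= d} c_u u(x)  lies in I^d.  Factoring a chosen degree-d
   divisor v out of each monomial u writes the partial sums as
   sum_v v(x) t_v(N) over the finitely many v of degree d, where each t_v is
   Cauchy; by completeness t_v -> l_v, and by separatedness
   g = sum_v v(x) l_v, which lies in I^d. *)

Section Ideals.
Variable S : comUnitRingType.
Implicit Types (J : S -> Prop) (a b c f : S).

Lemma ideal_gen_nth (g : seq S) k : (k < size g)%N -> ideal_gen g g`_k.
Proof.
move=> lt_k; exists (mkseq (fun j => (j == k)%:R) (size g)); rewrite size_mkseq.
split=> //; rewrite (bigD1 (Ordinal lt_k)) //= nth_mkseq // eqxx mul1r.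
rewrite big1 ?addr0 // => j ne_jk.
by rewrite nth_mkseq // -[k]/(val (Ordinal lt_k)) val_eqE (negbTE ne_jk) mul0r.
Qed.

Lemma ideal_genMl (g : seq S) c a : ideal_gen g a -> ideal_gen g (c * a).
Proof.
case=> s [Hs ->]; exists [seq c * z | z <- s]; rewrite size_map Hs; split=> //.
rewrite mulr_sumr; apply: eq_bigr => k _.
by rewrite (nth_map 0) ?mulrA // Hs ltn_ord.
Qed.

Definition ideal_pow_seq J k f : Prop :=
  exists s : seq (S * seq S),
    (forall q, q \in s -> size q.2 = k /\ forall a, a \in q.2 -> J a) /\
    f = \sum_(q <- s) q.1 * \prod_(a <- q.2) a.

Lemma ideal_powE J k f : ideal_pow J k f <-> ideal_pow_seq J k f.
Proof.
split.
  case=> c [p [Hs [Hp ->]]]; exists (zip c p); split.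
    move=> q /(nthP (0, [::])) [l]; rewrite size_zip Hs minnn => lt <-.
    by rewrite nth_zip //=; apply: Hp.
  rewrite (big_nth (0, [::])) size_zip Hs minnn big_mkord.
  by apply: eq_bigr => l _; rewrite nth_zip.
case=> s [Hs ->]; exists (map fst s), (map snd s); rewrite !size_map; split=> //.
split.
  by move=> l lt; rewrite (nth_map (0, [::])) //; apply: Hs; apply: mem_nth.
rewrite (big_nth (0, [::])) big_mkord; apply: eq_bigr => l _.
by rewrite (nth_map (0, [::])) // (nth_map (0, [::])).
Qed.

Lemma ideal_pow0 J k : ideal_pow J k 0.
Proof. by apply/ideal_powE; exists [::]; rewrite big_nil. Qed.

Lemma ideal_powD J k a b :
  ideal_pow J k a -> ideal_pow J k b -> ideal_pow J k (a + b).
Proof.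
move=> /ideal_powE [s [Hs ->]] /ideal_powE [t [Ht ->]].
apply/ideal_powE; exists (s ++ t); split; last by rewrite big_cat.
by move=> q; rewrite mem_cat => /orP [/Hs|/Ht].
Qed.

Lemma ideal_powMl J k c a : ideal_pow J k a -> ideal_pow J k (c * a).
Proof.
move=> /ideal_powE [s [Hs ->]]; apply/ideal_powE.
exists [seq (c * q.1, q.2) | q <- s]; split; first by move=> q /mapP [q' /Hs H ->].
by rewrite big_map mulr_sumr; apply: eq_bigr => q _ /=; rewrite mulrA.
Qed.

Lemma ideal_powB J k a b :
  ideal_pow J k a -> ideal_pow J k b -> ideal_pow J k (a - b).
Proof. by move=> Ha Hb; apply: ideal_powD => //; rewrite -mulN1r; apply: ideal_powMl. Qed.

Lemma ideal_pow_sum J k (I : Type) (s : seq I) (P : pred I) (F : I -> S) :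
  (forall i, P i -> ideal_pow J k (F i)) -> ideal_pow J k (\sum_(i <- s | P i) F i).
Proof.
move=> HF; elim: s => [|i s IH]; first by rewrite big_nil; apply: ideal_pow0.
by rewrite big_cons; case: ifP => // Pi; apply: ideal_powD => //; apply: HF.
Qed.

Lemma ideal_pow_le J j k a : (j <= k)%N -> ideal_pow J k a -> ideal_pow J j a.
Proof.
move=> le_jk /ideal_powE [s [Hs ->]]; apply/ideal_powE.
exists [seq (q.1 * \prod_(b <- drop j q.2) b, take j q.2) | q <- s]; split.
  move=> q /mapP [q' /Hs [H1 H2] ->] /=; split; last by move=> b /mem_take /H2.
  by rewrite size_take H1; case: ltngtP le_jk => // ->.
rewrite big_map; apply: eq_bigr => q _ /=.
by rewrite -mulrA; congr (_ * _); rewrite mulrC -big_cat cat_take_drop.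
Qed.

Lemma ideal_pow_sub J J' k a :
  (forall b, J b -> J' b) -> ideal_pow J k a -> ideal_pow J' k a.
Proof.
move=> sJJ' /ideal_powE [s [Hs ->]]; apply/ideal_powE; exists s; split=> //.
by move=> q /Hs [H1 H2]; split=> // b /H2 /sJJ'.
Qed.

Lemma ideal_pow_prod J (s : seq S) :
  (forall a, a \in s -> J a) -> ideal_pow J (size s) (\prod_(a <- s) a).
Proof.
move=> Hs; apply/ideal_powE; exists [:: (1, s)]; split.
  by move=> q; rewrite inE => /eqP -> /=.
by rewrite big_seq1 mul1r.
Qed.

Lemma ideal_pow_full J k a : J 1 -> ideal_pow J k a.
Proof.
move=> J1; rewrite -[a]mulr1; apply: ideal_powMl.
have -> : (1 : S) = \prod_(b <- nseq k 1) b by rewrite big_nseq iter_mulr_1 expr1n.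
by rewrite -{1}(size_nseq k (1 : S)); apply: ideal_pow_prod => b /nseqP [-> _].
Qed.

End Ideals.

Section NadicLim.
Variable S : comUnitRingType.
Implicit Types (s t : nat -> S) (a b l : S).

Lemma nadic_lim_eventually s t a b N0 :
  (forall m, (N0 <= m)%N -> s m - a = t m - b) -> nadic_lim t b -> nadic_lim s a.
Proof.
move=> Est Ht k; have [N HN] := Ht k; exists (maxn N N0) => m.
rewrite geq_max => /andP [le_Nm le_N0m].
by rewrite Est //; apply: HN.
Qed.

Lemma eq_nadic_lim s t l : (forall N, s N = t N) -> nadic_lim t l -> nadic_lim s l.
Proof. by move=> Est; apply: (nadic_lim_eventually (N0 := 0)) => m _; rewrite Est. Qed.

Lemma nadic_limD s t a b :
  nadic_lim s a -> nadic_lim t b -> nadic_lim (fun N => s N + t N) (a + b).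
Proof.
move=> Hs Ht k; have [N1 H1] := Hs k; have [N2 H2] := Ht k.
exists (maxn N1 N2) => m; rewrite geq_max => /andP [le1 le2].
by rewrite opprD addrACA; apply: ideal_powD; [apply: H1 | apply: H2].
Qed.

Lemma nadic_limMl s c a : nadic_lim s a -> nadic_lim (fun N => c * s N) (c * a).
Proof.
move=> Hs k; have [N HN] := Hs k; exists N => m le_Nm.
by rewrite -mulrBr; apply: ideal_powMl; apply: HN.
Qed.

Lemma nadic_lim_unique s a b :
  (forall a, (forall k, ideal_pow (@maxideal S) k a) -> a = 0) ->
  nadic_lim s a -> nadic_lim s b -> a = b.
Proof.
move=> separated Ha Hb; apply/eqP; rewrite -subr_eq0; apply/eqP; apply: separated => k.
have [N1 H1] := Ha k; have [N2 H2] := Hb k; set m := maxn N1 N2.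
have -> : a - b = (s m - b) - (s m - a) by ring.
by apply: ideal_powB; [apply: H2; apply: leq_maxr | apply: H1; apply: leq_maxl].
Qed.

Lemma nadic_lim_combination (I : Type) (r : seq I) (P : pred I) (J : S -> Prop) d
    (a : I -> S) (t : I -> nat -> S) :
  (forall i, P i -> ideal_pow J d (a i)) -> (forall i, P i -> exists l, nadic_lim (t i) l) ->
  exists L, nadic_lim (fun N => \sum_(i <- r | P i) a i * t i N) L /\ ideal_pow J d L.
Proof.
move=> Ha Ht; elim: r => [|i r [L [HL JL]]].
  exists 0; split; last exact: ideal_pow0.
  by move=> k; exists 0%N => m _; rewrite big_nil subr0; apply: ideal_pow0.
case Pi: (P i); last first.
  by exists L; split=> //; apply: eq_nadic_lim HL => N; rewrite big_cons Pi.
have [l Hl] := Ht i Pi; exists (a i * l + L); split.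
  apply: eq_nadic_lim (nadic_limD (nadic_limMl (a i) Hl) HL) => N.
  by rewrite big_cons Pi.
by apply: ideal_powD => //; rewrite mulrC; apply: ideal_powMl; apply: Ha.
Qed.

End NadicLim.

Section TruncSum.
Variable S : comUnitRingType.
Variable r : nat.
Variable x : 'I_r -> S.
Variable Gamma : 'X_{1..r} -> bool.
Implicit Types (c : 'X_{1..r} -> S) (u : 'X_{1..r}).

Lemma Ix_gen i : Ix x (x i).
Proof.
have lt_i : (i < size [seq x i | i <- enum 'I_r])%N by rewrite size_map size_enum_ord.
by have := ideal_gen_nth lt_i; rewrite (nth_map i) ?nth_ord_enum // size_enum_ord.
Qed.

Lemma mono_evalD (u v : 'X_{1..r}) : mono_eval x (u + v)%MM = mono_eval x u * mono_eval x v.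
Proof. by rewrite /mono_eval -big_split; apply: eq_bigr => i _; rewrite mnmDE exprD. Qed.

Lemma ideal_pow_mono_eval u : ideal_pow (Ix x) (mdeg u) (mono_eval x u).
Proof.
have -> : mono_eval x u = \prod_(a <- [seq x i | i <- m2s u]) a.
  rewrite big_map /m2s big_flatten big_map /mono_eval big_enum /=.
  by apply: eq_bigr => i _; rewrite big_nseq iter_mulr_1.
rewrite -size_m2s -(size_map x); apply: ideal_pow_prod.
by move=> a /mapP [i _ ->]; apply: Ix_gen.
Qed.

Lemma mdeg_subm (u v : 'X_{1..r}) : (v <= u)%MM -> mdeg (u - v)%MM = (mdeg u - mdeg v)%N.
Proof. by move=> le_vu; rewrite -{2}(submK le_vu) mdegD addnK. Qed.

Lemma exists_lem_mdeg d u : (d <= mdeg u)%N -> exists v : 'X_{1..r}, mdeg v = d /\ (v <= u)%MM.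
Proof.
elim: d => [|d IH] le_du.
  by exists 0%MM; split; [apply: mdeg0 | apply/mnm_lepP => i; rewrite mnm0E].
have [v [Hv le_vu]] := IH (ltnW le_du).
case: (pickP (fun i => v i < u i)%N) => [i lt_vu|eq_vu].
  exists (v + U_(i))%MM; split; first by rewrite mdegD mdeg1 Hv addn1.
  apply/mnm_lepP => j; rewrite mnmDE mnm1E.
  by case: eqP => [<-|_]; [rewrite addn1 | rewrite addn0; apply: (mnm_lepP le_vu)].
have : (mdeg u <= mdeg v)%N.
  by rewrite !mdegE; apply: leq_sum => i _; rewrite leqNgt eq_vu.
by rewrite Hv leqNgt le_du.
Qed.

Lemma bsum_widen (P : pred 'X_{1..r}) (F : 'X_{1..r} -> S) N M : (N <= M)%N ->
  \sum_(u : 'X_{1..r < N} | P u) F u = \sum_(u : 'X_{1..r < M} | P u && (mdeg u < N)%N) F u.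
Proof.
move=> le_NM.
rewrite -(big_map (@bmnm r N) P F) -(big_map (@bmnm r M) (fun u => P u && (mdeg u < N)%N) F).
rewrite [in RHS](eq_bigl (fun u => (mdeg u < N)%N && P u)); last by move=> u; rewrite andbC.
rewrite -big_filter_cond; apply: perm_big; apply: uniq_perm.
- by rewrite map_inj_uniq ?index_enum_uniq //; apply: val_inj.
- by rewrite filter_uniq // map_inj_uniq ?index_enum_uniq //; apply: val_inj.
move=> u; rewrite mem_filter; apply/mapP/andP.
  case=> w _ ->; split; first exact: bmdeg.
  by apply/mapP; exists (BMultinom (leq_trans (bmdeg w) le_NM)); rewrite ?mem_index_enum.
by case=> lt_uN _; exists (BMultinom lt_uN); rewrite ?mem_index_enum.
Qed.

Lemma bsum_split (P : pred 'X_{1..r}) (F : 'X_{1..r} -> S) N M : (N <= M)%N ->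
  \sum_(u : 'X_{1..r < M} | P u) F u =
  \sum_(u : 'X_{1..r < N} | P u) F u + \sum_(u : 'X_{1..r < M} | P u && (N <= mdeg u)%N) F u.
Proof.
move=> le_NM; rewrite (bigID (fun u : 'X_{1..r < M} => (mdeg u < N)%N)) /= (bsum_widen _ _ le_NM).
by congr (_ + _); apply: eq_bigl => u; rewrite -leqNgt.
Qed.

Lemma trunc_sum_split c a b N : (a <= b)%N -> (b <= N)%N ->
  trunc_sum x Gamma c a N = trunc_sum x Gamma c a b + trunc_sum x Gamma c b N.
Proof.
move=> le_ab le_bN; rewrite /trunc_sum.
set P := fun u => Gamma u && (a <= mdeg u)%N; set F := fun u => c u * mono_eval x u.
rewrite (bsum_split P F le_bN) (bsum_widen P F (leqnn b)) {}/P {}/F.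
congr (_ + _); apply: eq_bigl => u; case: (Gamma u) => //=.
by case: (leqP b (mdeg u)) => le_bu; rewrite ?andbT ?andbF // (leq_trans le_ab le_bu).
Qed.

Lemma eq_trunc_sum c c' a N :
  (forall u, Gamma u -> (a <= mdeg u)%N -> (mdeg u < N)%N -> c u = c' u) ->
  trunc_sum x Gamma c a N = trunc_sum x Gamma c' a N.
Proof. by move=> Ecc'; apply: eq_bigr => u /andP [Gu le_au]; rewrite Ecc' // bmdeg. Qed.

Lemma trunc_sum_eq0 c a N :
  (forall u, Gamma u -> (a <= mdeg u)%N -> (mdeg u < N)%N -> c u = 0) ->
  trunc_sum x Gamma c a N = 0.
Proof. by move=> c0; apply: big1 => u /andP [Gu le_au]; rewrite c0 ?mul0r // bmdeg. Qed.

Lemma ideal_pow_trunc_sum c a N : ideal_pow (Ix x) a (trunc_sum x Gamma c a N).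
Proof.
apply: ideal_pow_sum => u /andP [_ le_au]; apply: ideal_powMl.
exact: ideal_pow_le le_au (ideal_pow_mono_eval u).
Qed.

Section DegreeDivisor.
Variable d : nat.

Definition deg_divisor u : option 'X_{1..r < d.+1} :=
  [pick v : 'X_{1..r < d.+1} | (mdeg v == d) && (v <= u)%MM].

Lemma deg_divisorP u (v : 'X_{1..r < d.+1}) : deg_divisor u = Some v -> mdeg v = d /\ (v <= u)%MM.
Proof. by rewrite /deg_divisor; case: pickP => // w /andP [/eqP ? ?] [<-]. Qed.

Lemma deg_divisor_exists u : (d <= mdeg u)%N -> exists v, deg_divisor u = Some v.
Proof.
move=> le_du; rewrite /deg_divisor; case: pickP => [v _|none]; first by exists v.
have [v [Hv le_vu]] := exists_lem_mdeg le_du.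
have lt_v : (mdeg v < d.+1)%N by rewrite Hv.
by move: (none (BMultinom lt_v)); rewrite /= Hv eqxx le_vu.
Qed.

Definition cofactor_sum c (v : 'X_{1..r < d.+1}) N : S :=
  \sum_(u : 'X_{1..r < N} | Gamma u && (d <= mdeg u)%N && (deg_divisor u == Some v))
    c u * mono_eval x (u - v)%MM.

Lemma trunc_sum_factor c N :
  trunc_sum x Gamma c d N =
  \sum_(v : 'X_{1..r < d.+1} | mdeg v == d) mono_eval x v * cofactor_sum c v N.
Proof.
rewrite /trunc_sum (eq_bigr (fun u : 'X_{1..r < N} =>
    \sum_(v : 'X_{1..r < d.+1} | deg_divisor u == Some v)
      mono_eval x v * (c u * mono_eval x (u - v)%MM))); last first.
  move=> u /andP [_ le_du]; have [w Hw] := deg_divisor_exists le_du.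
  rewrite Hw (eq_bigl (pred1 w)) ?big_pred1_eq; last by move=> v; rewrite eq_sym.
  have [_ le_wu] := deg_divisorP Hw.
  have -> : mono_eval x u = mono_eval x (u - w)%MM * mono_eval x w.
    by rewrite -mono_evalD submK.
  by ring.
rewrite (exchange_big_dep (fun v : 'X_{1..r < d.+1} => mdeg v == d)) /=; last first.
  by move=> u v _ /eqP /deg_divisorP [-> _].
by apply: eq_bigr => v _; rewrite /cofactor_sum mulr_sumr.
Qed.

Lemma cofactor_sum_cauchy c (v : 'X_{1..r < d.+1}) :
  (forall a, Ix x a -> maxideal a) -> mdeg v = d -> nadic_cauchy (cofactor_sum c v).
Proof.
move=> I_max Hv k; exists (k + d)%N => m le_m.
rewrite /cofactor_sum.
rewrite (bsum_split (fun u => Gamma u && (d <= mdeg u)%N && (deg_divisor u == Some v))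
  (fun u => c u * mono_eval x (u - v)%MM) le_m) addrC addKr.
apply: ideal_pow_sum => u /andP [/andP [_ /eqP Hu] le_u]; apply: ideal_powMl.
have [_ le_vu] := deg_divisorP Hu.
apply: ideal_pow_sub I_max _; apply: ideal_pow_le (ideal_pow_mono_eval _).
by rewrite mdeg_subm // Hv; lia.
Qed.

End DegreeDivisor.

Lemma ideal_pow_trunc_sum_lim c d g : complete S ->
  nadic_lim (fun N => trunc_sum x Gamma c d N) g -> ideal_pow (Ix x) d g.
Proof.
move=> [separated cauchy_lim] Hg.
(* Unless I = S, I lies in the maximal ideal, so I-adic estimates are n-adic. *)
have [I1|I_proper] := classic (Ix x 1); first exact: ideal_pow_full.
have I_max a : Ix x a -> maxideal a.
  by move=> Ia; apply/negP => Ua; apply: I_proper; rewrite -(mulVr Ua); apply: ideal_genMl.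
have mono_pow (v : 'X_{1..r < d.+1}) :
    mdeg v == d -> ideal_pow (Ix x) d (mono_eval x v).
  by move=> /eqP Hv; have := ideal_pow_mono_eval v; rewrite Hv.
have cofactor_lim (v : 'X_{1..r < d.+1}) :
    mdeg v == d -> exists l, nadic_lim (cofactor_sum c v) l.
  by move=> /eqP Hv; apply/cauchy_lim/cofactor_sum_cauchy.
have [L [HL IL]] := nadic_lim_combination (index_enum _) mono_pow cofactor_lim.
by rewrite (nadic_lim_unique separated Hg (eq_nadic_lim (trunc_sum_factor d c) HL)).
Qed.

End TruncSum.

Section Expansion.
Variable S : comUnitRingType.
Variable r : nat.
Variable x : 'I_r -> S.
Variable Gamma : 'X_{1..r} -> bool.
Implicit Types (c : 'X_{1..r} -> S) (u : 'X_{1..r}) (f g : S) (j : option nat).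

Definition le_bound n j : bool := if j is Some j' then (n <= j')%N else true.

Definition admissible n j : Prop :=
  match j with Some j' => is_true (n <= j')%N | None => complete S end.

Lemma admissibleW n j : admissible n.+1 j -> admissible n j.
Proof. by case: j => //= j' /ltnW. Qed.

Lemma admissible_le_bound n j : admissible n j -> le_bound n j.
Proof. by case: j. Qed.

Definition in_deg_range i j u : bool :=
  if j is Some j' then (i <= mdeg u < j')%N else (i <= mdeg u)%N.

Lemma in_deg_range_ge i j u : in_deg_range i j u -> (i <= mdeg u)%N.
Proof. by case: j => [j'|] /=; lia. Qed.

Definition expands i j c f : Prop :=
  match j with
  | Some j' => ideal_pow (Ix x) j' (f - trunc_sum x Gamma c i j')
  | None => nadic_lim (fun N => trunc_sum x Gamma c i N) f
  end.

Definition coefs_in sigma i j c : Prop :=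
  forall u, Gamma u -> in_deg_range i j u -> in_image sigma (c u).

Definition expandable' i j : Prop :=
  forall sigma, lifting x sigma -> forall f, ideal_pow (Ix x) i f ->
  (exists c, coefs_in sigma i j c /\ expands i j c f) /\
  (forall c c', coefs_in sigma i j c -> expands i j c f ->
     coefs_in sigma i j c' -> expands i j c' f ->
     forall u, Gamma u -> in_deg_range i j u -> c u = c' u).

Lemma expandableE i j : expandable x Gamma i j <-> expandable' i j.
Proof. by case: j. Qed.

Lemma coefs_in0 sigma i j : lifting x sigma -> coefs_in sigma i j (fun=> 0).
Proof. by case=> sigma0 _ _ u _ _; exists 0; rewrite sigma0. Qed.

Lemma eq_expands i j c c' f :
  (forall u, Gamma u -> in_deg_range i j u -> c u = c' u) ->
  expands i j c f -> expands i j c' f.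
Proof.
case: j => [j|] /= Ecc'.
  by rewrite (@eq_trunc_sum _ _ _ _ c c') // => u Gu le_iu lt_uj; apply: Ecc' => //; apply/andP.
apply: eq_nadic_lim => N; apply: eq_trunc_sum => u Gu le_iu _.
by apply/esym/Ecc'.
Qed.

Lemma expands_shift i1 i2 j c f : (i1 <= i2)%N -> le_bound i2 j ->
  expands i1 j c f <-> expands i2 j c (f - trunc_sum x Gamma c i1 i2).
Proof.
case: j => [j|] /= le12 le2j.
  by rewrite (trunc_sum_split _ _ _ le12 le2j) opprD addrA.
by split; apply: (nadic_lim_eventually (N0 := i2)) => m le2m;
  rewrite (trunc_sum_split _ _ _ le12 le2m); ring.
Qed.

Lemma expands_ideal_pow i j c g : admissible i j -> expands i j c g -> ideal_pow (Ix x) i g.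
Proof.
case: j => [j|] /= Hj; last exact: ideal_pow_trunc_sum_lim.
move=> Hg; rewrite -(subrK (trunc_sum x Gamma c i j) g).
by apply: ideal_powD; [apply: ideal_pow_le Hj Hg | apply: ideal_pow_trunc_sum].
Qed.

Definition glue n c c' u : S := if (mdeg u < n)%N then c u else c' u.

Section Split.
Variables (i1 i2 : nat) (j : option nat).
Hypothesis lt12 : (i1 < i2)%N.
(* [(i2 < j')%N] is [(i2.+1 <= j')%N], so this is the theorem's hypothesis on i3. *)
Hypothesis Hj : admissible i2.+1 j.
Let le2j : le_bound i2 j := admissible_le_bound (admissibleW Hj).

Lemma in_deg_range_head u : in_deg_range i1 (Some i2) u -> in_deg_range i1 j u.
Proof. by case: j Hj => [j'|] /=; lia. Qed.

Lemma in_deg_range_tail u : in_deg_range i2 j u -> in_deg_range i1 j u.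
Proof. by case: j => [j'|] /=; lia. Qed.

Lemma in_deg_range_lo u : in_deg_range i1 j u -> (mdeg u < i2)%N -> in_deg_range i1 (Some i2) u.
Proof. by case: j => [j'|] /=; lia. Qed.

Lemma in_deg_range_hi u : in_deg_range i1 j u -> ~~ (mdeg u < i2)%N -> in_deg_range i2 j u.
Proof. by case: j => [j'|] /=; lia. Qed.

Lemma coefs_in_head sigma c : coefs_in sigma i1 j c -> coefs_in sigma i1 (Some i2) c.
Proof. by move=> Hc u Gu /in_deg_range_head; apply: Hc. Qed.

Lemma coefs_in_tail sigma c : coefs_in sigma i1 j c -> coefs_in sigma i2 j c.
Proof. by move=> Hc u Gu /in_deg_range_tail; apply: Hc. Qed.

Lemma coefs_in_glue sigma c c' :
  coefs_in sigma i1 (Some i2) c -> coefs_in sigma i2 j c' ->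
  coefs_in sigma i1 j (glue i2 c c').
Proof.
move=> Hc Hc' u Gu Hu; rewrite /glue; case: ifPn => lt_u2.
  by apply: Hc => //; apply: in_deg_range_lo.
by apply: Hc' => //; apply: in_deg_range_hi.
Qed.

Lemma expands_tail c f :
  expands i1 j c f -> expands i2 j c (f - trunc_sum x Gamma c i1 i2).
Proof. exact: (expands_shift _ _ (ltnW lt12) le2j).1. Qed.

Lemma expands_head c f : expands i1 j c f -> expands i1 (Some i2) c f.
Proof. by move=> /expands_tail; apply: expands_ideal_pow; apply: admissibleW. Qed.

Lemma expands_glue c c' f :
  expands i2 j c' (f - trunc_sum x Gamma c i1 i2) -> expands i1 j (glue i2 c c') f.
Proof.
move=> Hc'.
apply/(expands_shift _ _ (ltnW lt12) le2j).
rewrite (@eq_trunc_sum _ _ _ _ (glue i2 c c') c) => [|u _ _ lt_u2]; last by rewrite /glue lt_u2.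
apply: eq_expands Hc' => u _ /in_deg_range_ge le_2u.
by rewrite /glue ltnNge le_2u.
Qed.

Lemma expandable_tail :
  expandable' i1 (Some i2) -> expandable' i1 j -> expandable' i2 j.
Proof.
move=> E1 E2 sigma Hsigma f Hf.
have Hf1 : ideal_pow (Ix x) i1 f by apply: ideal_pow_le (ltnW lt12) Hf.
have [[c [Hc c_f]] uniq2] := E2 sigma Hsigma f Hf1.
(* As f lies in I^i2, both c and 0 expand f from degree i1 to i2. *)
have c_head0 u : Gamma u -> in_deg_range i1 (Some i2) u -> c u = 0.
  have [_ uniq1] := E1 sigma Hsigma f Hf1.
  move=> Gu Hu; apply: (uniq1 _ _ (coefs_in_head Hc) (expands_head c_f)
                                 (coefs_in0 Hsigma) _ u Gu Hu).
  by rewrite /expands trunc_sum_eq0 ?subr0.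
have trunc0 : trunc_sum x Gamma c i1 i2 = 0.
  by apply: trunc_sum_eq0 => u Gu le_1u lt_u2; apply: c_head0 => //; apply/andP.
have glue0 c' : coefs_in sigma i2 j c' -> expands i2 j c' f ->
    coefs_in sigma i1 j (glue i2 (fun=> 0) c') /\ expands i1 j (glue i2 (fun=> 0) c') f.
  move=> Hc' c'_f; split; first exact: coefs_in_glue (coefs_in0 Hsigma) Hc'.
  by apply: expands_glue; rewrite trunc_sum_eq0 ?subr0.
split.
  by exists c; split; [apply: coefs_in_tail | have := expands_tail c_f; rewrite trunc0 subr0].
move=> c1 c2 Hc1 c1_f Hc2 c2_f u Gu Hu.
have [Hg1 g1_f] := glue0 c1 Hc1 c1_f; have [Hg2 g2_f] := glue0 c2 Hc2 c2_f.
have := uniq2 _ _ Hg1 g1_f Hg2 g2_f u Gu (in_deg_range_tail Hu).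
by rewrite /glue ltnNge (in_deg_range_ge Hu).
Qed.

Lemma expandable_glue :
  expandable' i1 (Some i2) -> expandable' i2 j -> expandable' i1 j.
Proof.
move=> E1 E3 sigma Hsigma f Hf.
have [[a [Ha a_f]] uniq1] := E1 sigma Hsigma f Hf.
split.
  have [[b [Hb b_f]] _] := E3 sigma Hsigma _ a_f.
  by exists (glue i2 a b); split; [apply: coefs_in_glue | apply: expands_glue].
move=> c c' Hc c_f Hc' c'_f u Gu Hu.
have Ehead := uniq1 c c' (coefs_in_head Hc) (expands_head c_f)
                          (coefs_in_head Hc') (expands_head c'_f).
have [lt_u2|ge_u2] := boolP (mdeg u < i2)%N.
  by apply: Ehead => //; apply: in_deg_range_lo.
have [_ uniq3] := E3 sigma Hsigma _ (expands_head c_f).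
apply: uniq3 (coefs_in_tail Hc) (expands_tail c_f) (coefs_in_tail Hc') _ _ Gu _.
  rewrite (@eq_trunc_sum _ _ _ _ c c') => [|v Gv le_1v lt_v2]; first exact: expands_tail.
  by apply: Ehead => //; apply/andP.
exact: in_deg_range_hi.
Qed.

Lemma expandable_head :
  expandable' i1 j -> expandable' i2 j -> expandable' i1 (Some i2).
Proof.
move=> E2 E3 sigma Hsigma f Hf.
have [[c [Hc c_f]] uniq2] := E2 sigma Hsigma f Hf.
split; first by exists c; split; [apply: coefs_in_head | apply: expands_head].
have extend a : coefs_in sigma i1 (Some i2) a -> expands i1 (Some i2) a f ->
    exists b, coefs_in sigma i1 j (glue i2 a b) /\ expands i1 j (glue i2 a b) f.
  move=> Ha a_f; have [[b [Hb b_f]] _] := E3 sigma Hsigma _ a_f.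
  by exists b; split; [apply: coefs_in_glue | apply: expands_glue].
move=> a a' Ha a_f Ha' a'_f u Gu Hu.
have [b [Hab ab_f]] := extend a Ha a_f; have [b' [Hab' ab'_f]] := extend a' Ha' a'_f.
have := uniq2 _ _ Hab ab_f Hab' ab'_f u Gu (in_deg_range_head Hu).
by move: Hu; rewrite /glue /= => /andP [_ ->].
Qed.

End Split.
End Expansion.

Theorem lemma3p7 (S : comUnitRingType) (r : nat) (x : 'I_r -> S)
  (Gamma : 'X_{1..r} -> bool) (i1 i2 : nat) (i3 : option nat) :
  noetherian S -> local_ring S ->
  (0 < i1)%N -> (i1 < i2)%N ->
  match i3 with Some j => is_true (i2 < j)%N | None => complete S end ->
  let E1 := expandable x Gamma i1 (Some i2) in
  let E2 := expandable x Gamma i1 i3 in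
  let E3 := expandable x Gamma i2 i3 in
  [/\ E1 -> E2 -> E3, E1 -> E3 -> E2 & E2 -> E3 -> E1].
Proof.
move=> _ _ _ lt12 Hi3 E1 E2 E3; rewrite {}/E1 {}/E2 {}/E3.
split=> /expandableE E /expandableE E'; apply/expandableE.
- exact: expandable_tail lt12 Hi3 E E'.
- exact: expandable_glue lt12 Hi3 E E'.
- exact: expandable_head lt12 Hi3 E E'.
Qed.
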